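(* Let $\mathcal{C}$ be a prevariety over a finite alphabet $A$ and let $\alpha:A^*\to M$ be a surjective morphism into a finite monoid. For every idempotent $e\in M$, the $\mathcal{C}$-orbit of $e$ for $\alpha$ is a subsemigroup of $M$; moreover, it is a monoid whose neutral element is $e$.
   Context: Fix a finite alphabet $A$. A prevariety is a class of regular languages over $A$ containing $\emptyset$ and $A^*$, closed under union, intersection, complement, and under the quotients $u^{-1}L=\{w\mid uw\in L\}$ and $Lu^{-1}=\{w\mid wu\in L\}$. A language $L_1$ is $\mathcal{C}$-separable from $L_2$ if some $K\in\mathcal{C}$ satisfies $L_1\subseteq K$ and $K\cap L_2=\emptyset$. For a morphism $\alpha:A^*\to M$, $(s,t)\in M^2$ is a $\mathcal{C}$-pair if $\alpha^{-1}(s)$ is not $\mathcal{C}$-separable from $\alpha^{-1}(t)$. For an idempotent $e\in M$, the $\mathcal{C}$-orbit of $e$ for $\alpha$ is $\{ese\mid s\in M,\ (e,s)\text{ is a }\mathcal{C}\text{-pair}\}$. *)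

From mathcomp Require Import all_boot.
Set Implicit Arguments. Unset Strict Implicit. Unset Printing Implicit Defensive.

Definition lang (A : Type) := seq A -> Prop.

Definition regular (A : finType) (L : lang A) : Prop :=
  exists (Q : finType) (q0 : Q) (delta : Q -> A -> Q) (F : pred Q),
    forall w, L w <-> F (foldl delta q0 w).

(* Since languages are sets, the class is also required
   to respect extensional equality of languages. *)
Definition prevariety (A : finType) (C : lang A -> Prop) : Prop :=
  (forall L, C L -> regular L) /\
  (forall L K, (forall w, L w <-> K w) -> C L -> C K) /\
  C (fun _ => False) /\ C (fun _ => True) /\
  (forall L K, C L -> C K -> C (fun w => L w \/ K w)) /\
  (forall L K, C L -> C K -> C (fun w => L w /\ K w)) /\
  (forall L, C L -> C (fun w => ~ L w)) /\
  (forall L u, C L -> C (fun w => L (u ++ w)) /\ C (fun w => L (w ++ u))).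

Definition separable (A : finType) (C : lang A -> Prop) (L1 L2 : lang A) : Prop :=
  exists K, [/\ C K, (forall w, L1 w -> K w) & (forall w, K w -> L2 w -> False)].

Definition is_monoid (M : finType) (mul : M -> M -> M) (one : M) : Prop :=
  [/\ (forall x y z, mul x (mul y z) = mul (mul x y) z),
      (forall x, mul one x = x) & (forall x, mul x one = x)].

Definition is_morphism (A M : finType) (mul : M -> M -> M) (one : M)
  (alpha : seq A -> M) : Prop :=
  alpha [::] = one /\ (forall u v, alpha (u ++ v) = mul (alpha u) (alpha v)).

Definition C_pair (A M : finType) (C : lang A -> Prop) (alpha : seq A -> M)
  (s t : M) : Prop :=
  ~ separable C (fun w => alpha w = s) (fun w => alpha w = t).

Definition C_orbit (A M : finType) (C : lang A -> Prop) (mul : M -> M -> M)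
  (alpha : seq A -> M) (e : M) : M -> Prop :=
  fun x => exists s, C_pair C alpha e s /\ x = mul (mul e s) e.

From mathcomp Require Import all_boot.
From Stdlib Require Import Classical.

Set Implicit Arguments.
Unset Strict Implicit.
Unset Printing Implicit Defensive.

(* The C-pair relation is compatible with multiplication: if K in C separated
   alpha^-1(s1 s2) from alpha^-1(t1 t2), the intersection of the right
   quotients K y^-1 over alpha y = s2 is a finite intersection (K is regular),
   hence in C, and contains alpha^-1(s1); as (s1, t1) is a C-pair it contains
   some x with alpha x = t1, and then x^-1 K separates alpha^-1(s2) from
   alpha^-1(t2).  Hence, as (e, e) is a C-pair, (e s e)(e t e) = e (s e t) e
   with (e, s e t) = (e e e, s e t) again a C-pair. *)

Section Prevariety.
Variables (A : finType) (C : lang A -> Prop).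
Hypothesis hC : prevariety C.

Lemma prevariety_eq (L K : lang A) : (forall w, L w <-> K w) -> C L -> C K.
Proof. by case: hC => _ [eqC _]; apply: eqC. Qed.

Lemma prevariety_full : C (fun _ => True).
Proof. by case: hC => _ [_ [_ []]]. Qed.

Lemma prevariety_and (L K : lang A) : C L -> C K -> C (fun w => L w /\ K w).
Proof. by case: hC => _ [_ [_ [_ [_ [andC _]]]]]; apply: andC. Qed.

Lemma prevariety_lquo (L : lang A) u : C L -> C (fun w => L (u ++ w)).
Proof. by case: hC => _ [_ [_ [_ [_ [_ [_ quoC]]]]]] CL; case: (quoC L u CL). Qed.

Lemma prevariety_rquo (L : lang A) u : C L -> C (fun w => L (w ++ u)).
Proof. by case: hC => _ [_ [_ [_ [_ [_ [_ quoC]]]]]] CL; case: (quoC L u CL). Qed.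

Lemma prevariety_bigI (I : finType) (F : I -> lang A) :
  (forall i, C (F i)) -> C (fun w => forall i, F i w).
Proof.
move=> CF.
have Cs (s : seq I) : C (fun w => forall i, i \in s -> F i w).
  elim: s => [|i s IHs].
    by apply: prevariety_eq prevariety_full => w; split=> // _ j; rewrite in_nil.
  apply: prevariety_eq (prevariety_and (CF i) IHs) => w; split.
    by move=> [Fi Fs] j; rewrite inE => /predU1P [->|/Fs].
  by move=> Fw; split=> [|j js]; apply: Fw; rewrite inE ?eqxx ?js ?orbT.
apply: prevariety_eq (Cs (enum I)) => w.
by split=> Fw i; [apply: Fw; rewrite mem_enum | move=> _; apply: Fw].
Qed.

(* The quotient K y^-1 only depends on the set of states from which y leads
   to acceptance, so the intersection ranges over finitely many languages. *)
Lemma prevariety_bigI_rquo (K : lang A) (P : seq A -> Prop) :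
  C K -> C (fun x => forall y, P y -> K (x ++ y)).
Proof.
move=> CK; case: hC => reg _; have [Q [q0 [delta [F KF]]]] := reg K CK.
pose accepting y : {set Q} := [set q | F (foldl delta q y)].
have K_cat x y : K (x ++ y) <-> foldl delta q0 x \in accepting y.
  by rewrite KF foldl_cat inE.
pose G (S : {set Q}) x := forall y, P y -> accepting y = S -> K (x ++ y).
have CG S : C (G S).
  have [[y0 [Py0 <-]] | noy] := classic (exists y, P y /\ accepting y = S).
    apply: prevariety_eq (prevariety_rquo y0 CK) => x; split; last exact.
    by move=> Kx y _ eqS; apply/K_cat; rewrite eqS; apply/K_cat.
  apply: prevariety_eq prevariety_full => x; split=> // _ y Py eqS.
  by case: noy; exists y.
apply: prevariety_eq (prevariety_bigI CG) => x; split.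
  by move=> Gx y Py; apply: Gx _ y Py erefl.
by move=> Kx S y Py _; apply: Kx.
Qed.

End Prevariety.

Section CPairs.
Variables (A M : finType) (C : lang A -> Prop) (mul : M -> M -> M) (one : M).
Variable alpha : seq A -> M.
Hypotheses (hC : prevariety C) (halpha : is_morphism mul one alpha).

Lemma C_pair_refl s : (exists w, alpha w = s) -> C_pair C alpha s s.
Proof. by move=> [w aw] [K [_ sK Ks]]; apply: Ks (sK w aw) aw. Qed.

Lemma C_pair_mul s1 t1 s2 t2 :
  C_pair C alpha s1 t1 -> C_pair C alpha s2 t2 ->
  C_pair C alpha (mul s1 s2) (mul t1 t2).
Proof.
move=> p1 p2 [K [CK sK Kt]]; case: halpha => _ alphaM.
apply: p1; exists (fun x => forall y, alpha y = s2 -> K (x ++ y)); split.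
- by apply: (prevariety_bigI_rquo hC).
- by move=> x ax y ay; apply: sK; rewrite alphaM ax ay.
- move=> x Kx ax; apply: p2; exists (fun y => K (x ++ y)); split.
  + by apply: (prevariety_lquo hC).
  + exact: Kx.
  + by move=> y Kxy ay; apply: Kt Kxy _; rewrite alphaM ax ay.
Qed.

Variable e : M.
Hypotheses (mulA : associative mul) (ee : mul e e = e).

Lemma C_orbit_idem : (exists w, alpha w = e) -> C_orbit C mul alpha e e.
Proof. by move=> he; exists e; split; [apply: C_pair_refl | rewrite !ee]. Qed.

Lemma C_orbit_mul x y : (exists w, alpha w = e) ->
  C_orbit C mul alpha e x -> C_orbit C mul alpha e y ->
  C_orbit C mul alpha e (mul x y).
Proof.
move=> he [s [es ->]] [t [et ->]]; exists (mul (mul s e) t); split.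
  by rewrite -{1}ee -{1}ee; do 2!apply: C_pair_mul => //; apply: C_pair_refl.
by rewrite !mulA -(mulA _ e e) ee.
Qed.

Lemma C_orbit_neutral x : C_orbit C mul alpha e x -> mul e x = x /\ mul x e = x.
Proof. by move=> [s [_ ->]]; rewrite !mulA ee -!mulA ee. Qed.

End CPairs.

Theorem lemma5p5 (A M : finType) (mul : M -> M -> M) (one : M)
  (C : lang A -> Prop) (alpha : seq A -> M) :
  prevariety C -> is_monoid mul one -> is_morphism mul one alpha ->
  (forall m : M, exists w, alpha w = m) ->
  forall e : M, mul e e = e ->
    (forall x y, C_orbit C mul alpha e x -> C_orbit C mul alpha e y ->
       C_orbit C mul alpha e (mul x y)) /\
    C_orbit C mul alpha e e /\
    (forall x, C_orbit C mul alpha e x -> mul e x = x /\ mul x e = x).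
Proof.
move=> hC [mulA _ _] halpha surj e ee; split; last split.
- by move=> x y; apply: (C_orbit_mul hC halpha mulA ee (surj e)).
- exact: C_orbit_idem ee (surj e).
- by move=> x; apply: (C_orbit_neutral mulA ee).
Qed.
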